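(* Assume $\phi$ is convex and decreasing (i.e. $\phi(a)\ge\phi(b)$ whenever $a\le b$), $R_\phi$ is strictly convex with unique minimizer $\mathbf{w}_{\mathrm{sup}}$, and for each $j=1,\dots,U$ the derivatives $\phi'(\mathbf{x}_{\mathrm{u},j}^\top\mathbf{w}_{\mathrm{sup}})$ and $\phi'(-\mathbf{x}_{\mathrm{u},j}^\top\mathbf{w}_{\mathrm{sup}})$ exist. Then there is no $\mathbf{w}_{\mathrm{semi}}\in\mathbb{R}^d$ that satisfies both of the following: (i) $\max_{\mathbf{q}\in[0,1]^U} D_\phi(\mathbf{w}_{\mathrm{semi}},\mathbf{q})\le 0$; (ii) there exists $\mathbf{q}^\ast\in[0,1]^U$ with $D_\phi(\mathbf{w}_{\mathrm{semi}},\mathbf{q}^\ast)<0$.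
   Context: Fix integers $L,U,d\ge 1$. Let $\mathbf{X}\in\mathbb{R}^{L\times d}$ be a matrix whose rows $\mathbf{x}_1^\top,\dots,\mathbf{x}_L^\top$ are the labeled objects, with labels $\mathbf{y}\in\{-1,+1\}^L$. Let $\mathbf{X}_{\mathrm{u}}\in\mathbb{R}^{U\times d}$ be a matrix whose rows $\mathbf{x}_{\mathrm{u},1}^\top,\dots,\mathbf{x}_{\mathrm{u},U}^\top$ are the unlabeled objects. Let $\phi:\mathbb{R}\to\mathbb{R}$ be a loss function, $\Omega:\mathbb{R}^d\to\mathbb{R}$ a convex function and $\lambda\ge 0$. The supervised risk is $R_\phi(\mathbf{w})=\sum_{i=1}^L\phi(y_i\mathbf{x}_i^\top\mathbf{w})+\lambda\Omega(\mathbf{w})$. For responsibilities $\mathbf{q}\in[0,1]^U$ the semi-supervised risk is $R^{\mathrm{semi}}_\phi(\mathbf{w},\mathbf{q})=R_\phi(\mathbf{w})+\sum_{j=1}^U\big[q_j\phi(\mathbf{x}_{\mathrm{u},j}^\top\mathbf{w})+(1-q_j)\phi(-\mathbf{x}_{\mathrm{u},j}^\top\mathbf{w})\big]$. Given the minimizer $\mathbf{w}_{\mathrm{sup}}$ of $R_\phi$, define $D_\phi(\mathbf{w},\mathbf{q})=R^{\mathrm{semi}}_\phi(\mathbf{w},\mathbf{q})-R^{\mathrm{semi}}_\phi(\mathbf{w}_{\mathrm{sup}},\mathbf{q})$. *)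

From Stdlib Require Import Reals.
From Stdlib Require Fin.
Open Scope R_scope.

Definition vec (n : nat) := Fin.t n -> R.

Fixpoint fsum {n : nat} : (Fin.t n -> R) -> R :=
  match n return (Fin.t n -> R) -> R with
  | O => fun _ => 0
  | S m => fun f => f Fin.F1 + fsum (fun i => f (Fin.FS i))
  end.

Definition dot {d : nat} (x w : vec d) : R := fsum (fun k => x k * w k).

Definition vcomb {d : nat} (t : R) (w v : vec d) : vec d :=
  fun k => t * w k + (1 - t) * v k.

Definition convex_fun (f : R -> R) : Prop :=
  forall a b t, 0 <= t <= 1 -> f (t * a + (1 - t) * b) <= t * f a + (1 - t) * f b.

Definition decreasing_fun (f : R -> R) : Prop :=
  forall a b, a <= b -> f b <= f a.

Definition convex_vfun {d : nat} (F : vec d -> R) : Prop :=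
  forall w v t, 0 <= t <= 1 -> F (vcomb t w v) <= t * F w + (1 - t) * F v.

Definition strictly_convex_vfun {d : nat} (F : vec d -> R) : Prop :=
  forall w v t, w <> v -> 0 < t < 1 -> F (vcomb t w v) < t * F w + (1 - t) * F v.

Definition Rsup {L d : nat} (phi : R -> R) (Omega : vec d -> R) (lambda : R)
  (X : Fin.t L -> vec d) (y : Fin.t L -> R) (w : vec d) : R :=
  fsum (fun i => phi (y i * dot (X i) w)) + lambda * Omega w.

Definition Rsemi {L U d : nat} (phi : R -> R) (Omega : vec d -> R) (lambda : R)
  (X : Fin.t L -> vec d) (y : Fin.t L -> R) (Xu : Fin.t U -> vec d)
  (w : vec d) (q : Fin.t U -> R) : R :=
  Rsup phi Omega lambda X y w
  + fsum (fun j => q j * phi (dot (Xu j) w) + (1 - q j) * phi (- dot (Xu j) w)).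

Definition Dphi {L U d : nat} (phi : R -> R) (Omega : vec d -> R) (lambda : R)
  (X : Fin.t L -> vec d) (y : Fin.t L -> R) (Xu : Fin.t U -> vec d)
  (wsup w : vec d) (q : Fin.t U -> R) : R :=
  Rsemi phi Omega lambda X y Xu w q - Rsemi phi Omega lambda X y Xu wsup q.

Definition in_box {U : nat} (q : Fin.t U -> R) : Prop :=
  forall j, 0 <= q j <= 1.

(* The learner may choose the responsibilities adversarially: putting q_j = 1 exactly
   when x_j^T w <= x_j^T w_sup (and q_j = 0 otherwise) makes each unlabeled term of
   D_phi(w, q) nonnegative because phi is decreasing, so D_phi(w, q) <= 0 forces
   R_phi(w) <= R_phi(w_sup).  Then w is a second minimizer of the strictly convex R_phi,
   hence w = w_sup, and D_phi(w_sup, q) = 0 for every q. *)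
From Stdlib Require Import Reals Lra Classical.
From Stdlib Require Fin.
Open Scope R_scope.

Lemma fsum_sub {n : nat} (f g : Fin.t n -> R) :
  fsum (fun i => f i - g i) = fsum f - fsum g.
Proof. induction n as [|n IHn]; simpl; [lra|]. rewrite IHn. lra. Qed.

Lemma fsum_nonneg {n : nat} (f : Fin.t n -> R) :
  (forall i, 0 <= f i) -> 0 <= fsum f.
Proof.
  induction n as [|n IHn]; simpl; intros Hf; [lra|].
  pose proof (Hf Fin.F1).
  pose proof (IHn (fun i => f (Fin.FS i)) (fun i => Hf (Fin.FS i))).
  lra.
Qed.

Lemma strictly_convex_minimizer_unique {d : nat} (F : vec d -> R) (v w : vec d) :
  strictly_convex_vfun F -> (forall u, F v <= F u) -> F w <= F v -> w = v.
Proof.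
  intros Hstrict Hmin Hw.
  destruct (classic (w = v)) as [E | NE]; [exact E |].
  assert (Hhalf : 0 < /2 < 1) by lra.
  pose proof (Hstrict w v (/2) NE Hhalf).
  pose proof (Hmin (vcomb (/2) w v)).
  lra.
Qed.

Definition pessimistic_label (a b : R) : R := if Rle_dec a b then 1 else 0.

Lemma pessimistic_label_in_01 (a b : R) : 0 <= pessimistic_label a b <= 1.
Proof. unfold pessimistic_label; destruct Rle_dec; lra. Qed.

Lemma pessimistic_label_loss_ge (phi : R -> R) (a b : R) :
  decreasing_fun phi ->
  let c := pessimistic_label a b in
  c * phi b + (1 - c) * phi (- b) <= c * phi a + (1 - c) * phi (- a).
Proof.
  intros Hdec c; unfold c, pessimistic_label; destruct Rle_dec as [Hab | Hab].
  - pose proof (Hdec a b Hab); lra.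
  - assert (Hopp : - a <= - b) by lra.
    pose proof (Hdec _ _ Hopp); lra.
Qed.

Section Risk_gap.

Variables (L U d : nat) (phi : R -> R) (Omega : vec d -> R) (lambda : R)
  (X : Fin.t L -> vec d) (y : Fin.t L -> R) (Xu : Fin.t U -> vec d).

Let Rs := Rsup phi Omega lambda X y.
Let D := Dphi phi Omega lambda X y Xu.

Definition pessimistic_q (wsup w : vec d) : Fin.t U -> R :=
  fun j => pessimistic_label (dot (Xu j) w) (dot (Xu j) wsup).

Lemma pessimistic_q_in_box (wsup w : vec d) : in_box (pessimistic_q wsup w).
Proof. intro j; apply pessimistic_label_in_01. Qed.

Lemma Dphi_pessimistic_ge (wsup w : vec d) :
  decreasing_fun phi -> Rs w - Rs wsup <= D wsup w (pessimistic_q wsup w).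
Proof.
  intros Hdec; unfold D, Dphi, Rsemi.
  set (c := pessimistic_q wsup w).
  assert (Hgap : 0 <= fsum (fun j =>
     (c j * phi (dot (Xu j) w) + (1 - c j) * phi (- dot (Xu j) w)) -
     (c j * phi (dot (Xu j) wsup) + (1 - c j) * phi (- dot (Xu j) wsup)))).
  { apply fsum_nonneg; intro j.
    pose proof (pessimistic_label_loss_ge phi (dot (Xu j) w) (dot (Xu j) wsup) Hdec).
    unfold c, pessimistic_q; lra. }
  rewrite fsum_sub in Hgap.
  unfold Rs; lra.
Qed.

Lemma Dphi_diag (w : vec d) (q : Fin.t U -> R) : D w w q = 0.
Proof. unfold D, Dphi; lra. Qed.

End Risk_gap.

Theorem theorem2 (L U d : nat) (hL : (1 <= L)%nat) (hU : (1 <= U)%nat) (hd : (1 <= d)%nat)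
  (X : Fin.t L -> vec d) (y : Fin.t L -> R) (hy : forall i, y i = 1 \/ y i = -1)
  (Xu : Fin.t U -> vec d)
  (phi : R -> R) (Omega : vec d -> R) (lambda : R)
  (hOmega : convex_vfun Omega) (hlambda : 0 <= lambda)
  (hphi_conv : convex_fun phi) (hphi_dec : decreasing_fun phi)
  (hR_strict : strictly_convex_vfun (Rsup phi Omega lambda X y))
  (wsup : vec d)
  (hmin : forall w, Rsup phi Omega lambda X y wsup <= Rsup phi Omega lambda X y w)
  (hder_pos : forall j, derivable_pt phi (dot (Xu j) wsup))
  (hder_neg : forall j, derivable_pt phi (- dot (Xu j) wsup)) :
  ~ (exists wsemi : vec d,
       (forall q, in_box q -> Dphi phi Omega lambda X y Xu wsup wsemi q <= 0) /\
       (exists qstar, in_box qstar /\ Dphi phi Omega lambda X y Xu wsup wsemi qstar < 0)).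
Proof.
  intros [w [Hsafe [qstar [_ Hgain]]]].
  pose proof (Dphi_pessimistic_ge L U d phi Omega lambda X y Xu wsup w hphi_dec) as Hgap.
  pose proof (Hsafe _ (pessimistic_q_in_box U d Xu wsup w)) as Hworst.
  assert (Hw : w = wsup).
  { apply (strictly_convex_minimizer_unique _ wsup w hR_strict hmin); lra. }
  subst w.
  rewrite Dphi_diag in Hgain.
  lra.
Qed.
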